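(* The graph $(C_3\cup P_2)+C_3$ is 1-planar.
   Context: A graph is 1-planar if it has a drawing in the plane in which each edge is crossed at most once. The join $G+H$ is obtained from vertex-disjoint copies of $G$ and $H$ by adding all edges between $V(G)$ and $V(H)$. $C_3$ is the triangle, $P_2$ is a single edge, $\cup$ is disjoint union. *)

From mathcomp Require Import all_boot.
From Stdlib Require Import Reals.

Set Implicit Arguments. Unset Strict Implicit. Unset Printing Implicit Defensive.

(* A (simple) graph is given by a finite vertex type and an adjacency relation
   (symmetric, irreflexive for all graphs built below). *)

Definition C3 : rel 'I_3 := fun i j => i != j.
Definition P2 : rel 'I_2 := fun i j => i != j.

Definition gunion (T1 T2 : finType) (r1 : rel T1) (r2 : rel T2) : rel (T1 + T2) :=
  fun x y => match x, y with
             | inl a, inl b => r1 a b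
             | inr a, inr b => r2 a b
             | _, _ => false
             end.

Definition gjoin (T1 T2 : finType) (r1 : rel T1) (r2 : rel T2) : rel (T1 + T2) :=
  fun x y => match x, y with
             | inl a, inl b => r1 a b
             | inr a, inr b => r2 a b
             | _, _ => true
             end.

Definition point := (R * R)%type.

Definition cont_arc (g : R -> point) : Prop :=
  forall t, continuity_pt (fun s => fst (g s)) t /\ continuity_pt (fun s => snd (g s)) t.

Definition same_edge (T : Type) (u v x y : T) : Prop :=
  (u = x /\ v = y) \/ (u = y /\ v = x).

(* Vertices are distinct points p x; the edge {x,y} is the
   simple arc gamma x y restricted to [0,1] (gamma y x is the same arc traversed
   backwards), joining p x to p y, whose interior avoids all vertex points.
   One-planarity condition: for every edge, there is at most one pair
   (other edge, point) where an interior point of the edge lies on the interior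
   of another edge (so the edge meets the other edges in at most one point,
   and that point lies on only one other edge). *)
Definition one_planar_drawing (T : finType) (e : rel T)
    (p : T -> point) (gamma : T -> T -> R -> point) : Prop :=
  (forall x y, p x = p y -> x = y) /\
  (forall x y, e x y ->
     cont_arc (gamma x y) /\
     gamma x y 0%R = p x /\ gamma x y 1%R = p y /\
     (forall t, (0 <= t <= 1)%R -> gamma y x t = gamma x y (1 - t)%R) /\
     (forall t s, (0 <= t <= 1)%R -> (0 <= s <= 1)%R ->
        gamma x y t = gamma x y s -> t = s) /\
     (forall z t, (0 < t < 1)%R -> gamma x y t <> p z)) /\
  (forall x y u v u' v' t s t' s',
     e x y -> e u v -> e u' v' ->
     ~ same_edge u v x y -> ~ same_edge u' v' x y ->
     (0 < t < 1)%R -> (0 < s < 1)%R -> (0 < t' < 1)%R -> (0 < s' < 1)%R ->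
     gamma x y t = gamma u v s -> gamma x y t' = gamma u' v' s' ->
     t = t' /\ same_edge u v u' v').

Definition one_planar (T : finType) (e : rel T) : Prop :=
  exists p gamma, @one_planar_drawing T e p gamma.

(* The drawing is straight-line.  The first triangle is the outer triangle
   v0 v1 v2, the second triangle v5 v6 v7 and the edge v3 v4 lie inside it.
   Of the 22 edges exactly four pairs cross:
   v0v5 x v1v6, v0v7 x v2v6, v1v7 x v2v5 and v3v6 x v4v7,
   and no two of these crossings share an edge. *)

From mathcomp Require Import all_boot.
From Stdlib Require Import Reals Lra.

Open Scope R_scope.

Definition seg (a b : point) (t : R) : point :=
  (fst a + t * (fst b - fst a), snd a + t * (snd b - snd a)).

Lemma seg_cont_arc a b : cont_arc (seg a b).
Proof.
have id_cont t : continuity_pt id t.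
  exact: derivable_continuous_pt (derivable_pt_id t).
move=> t; split; apply: continuity_pt_plus;
  by [apply: continuity_pt_const | apply: continuity_pt_mult => //; apply: continuity_pt_const].
Qed.

Lemma seg0 a b : seg a b 0 = a.
Proof. by case: a b => [a1 a2] [b1 b2]; rewrite /seg /=; f_equal; ring. Qed.

Lemma seg1 a b : seg a b 1 = b.
Proof. by case: a b => [a1 a2] [b1 b2]; rewrite /seg /=; f_equal; ring. Qed.

Lemma seg_rev a b t : seg b a t = seg a b (1 - t).
Proof. by case: a b => [a1 a2] [b1 b2]; rewrite /seg /=; f_equal; ring. Qed.

Lemma seg_inj a b t s : a <> b -> seg a b t = seg a b s -> t = s.
Proof.
case: a b => [a1 a2] [b1 b2] neq_ab [E1 E2].
have [//|neq_ts] := Req_dec t s.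
by exfalso; apply: neq_ab; congr pair; apply: (Rmult_eq_reg_l (t - s)); lra.
Qed.

Lemma same_edge_trans (T : Type) (a b a' b' c d : T) :
  same_edge a b c d -> same_edge a' b' c d -> same_edge a b a' b'.
Proof. by rewrite /same_edge; intuition subst; tauto. Qed.

Section StraightLineDrawing.

Variables (T : finType) (e : rel T) (p : T -> point).

Hypothesis e_irr : irreflexive e.
Hypothesis p_inj : injective p.
Hypothesis edge_avoids_vertices :
  forall x y z t, e x y -> 0 < t < 1 -> seg (p x) (p y) t <> p z.
Hypothesis edge_crossed_at_most_once : forall x y, e x y -> exists t0 u0 v0,
  forall u v t s, e u v -> ~ same_edge u v x y ->
  0 < t < 1 -> 0 < s < 1 -> seg (p x) (p y) t = seg (p u) (p v) s ->
  t = t0 /\ same_edge u v u0 v0.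

Lemma straight_line_one_planar : one_planar e.
Proof.
exists p, (fun x y => seg (p x) (p y)); split; first exact: p_inj.
split=> [x y exy | x y u v u' v' t s t' s' exy euv euv' nuv nuv' t01 s01 t'01 s'01].
  have neq_pxy : p x <> p y.
    by move=> /(@p_inj x y) eq_xy; move: exy; rewrite eq_xy e_irr.
  split; first exact: seg_cont_arc.
  split; first exact: seg0.
  split; first exact: seg1.
  split=> [t _|]; first exact: seg_rev.
  split=> [t s _ _|]; first exact: seg_inj.
  by move=> z t; apply: edge_avoids_vertices.
have [t0 [u0 [v0 cross]]] := edge_crossed_at_most_once x y exy.
move=> E E'.
have [-> uv0] := cross u v t s euv nuv t01 s01 E.
have [-> uv0'] := cross u' v' t' s' euv' nuv' t'01 s'01 E'.
by split=> //; apply: same_edge_trans uv0 uv0'.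
Qed.

End StraightLineDrawing.

Lemma gunion_irreflexive (T1 T2 : finType) (r1 : rel T1) (r2 : rel T2) :
  irreflexive r1 -> irreflexive r2 -> irreflexive (gunion r1 r2).
Proof. by move=> r1_irr r2_irr [x|x] /=. Qed.

Lemma gjoin_irreflexive (T1 T2 : finType) (r1 : rel T1) (r2 : rel T2) :
  irreflexive r1 -> irreflexive r2 -> irreflexive (gjoin r1 r2).
Proof. by move=> r1_irr r2_irr [x|x] /=. Qed.

Lemma C3_irreflexive : irreflexive C3.
Proof. by move=> i; rewrite /C3 eqxx. Qed.

Lemma P2_irreflexive : irreflexive P2.
Proof. by move=> i; rewrite /P2 eqxx. Qed.

Definition V : finType := (('I_3 + 'I_2) + 'I_3)%type.

Definition G : rel V := gjoin (gunion C3 P2) C3.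

Definition v0 : V := inl (inl (@Ordinal 3 0 isT)).
Definition v1 : V := inl (inl (@Ordinal 3 1 isT)).
Definition v2 : V := inl (inl (@Ordinal 3 2 isT)).
Definition v3 : V := inl (inr (@Ordinal 2 0 isT)).
Definition v4 : V := inl (inr (@Ordinal 2 1 isT)).
Definition v5 : V := inr (@Ordinal 3 0 isT).
Definition v6 : V := inr (@Ordinal 3 1 isT).
Definition v7 : V := inr (@Ordinal 3 2 isT).

Lemma V_ind (P : V -> Prop) :
  P v0 -> P v1 -> P v2 -> P v3 -> P v4 -> P v5 -> P v6 -> P v7 -> forall x, P x.
Proof.
move=> P0 P1 P2 P3 P4 P5 P6 P7 [[[i lti]|[i lti]]|[i lti]].
- by case: i lti => [|[|[|//]]] lti; rewrite (eq_irrelevance lti isT).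
- by case: i lti => [|[|//]] lti; rewrite (eq_irrelevance lti isT).
- by case: i lti => [|[|[|//]]] lti; rewrite (eq_irrelevance lti isT).
Qed.

Definition vertex_index (x : V) : nat :=
  match x with
  | inl (inl i) => val i
  | inl (inr i) => 3 + val i
  | inr i => 5 + val i
  end.

Definition pos (x : V) : point :=
  match vertex_index x with
  | 0 => (12, 11) | 1 => (3, 0) | 2 => (1, 10) | 3 => (5, 7)
  | 4 => (6, 7) | 5 => (6, 4) | 6 => (10, 9) | _ => (4, 9)
  end.

(* For the ordered edge xy, the parameter along seg (pos x) (pos y) of its
   crossing point and the edge crossing it there; junk values on uncrossed edges. *)
Definition crossing_param (x y : V) : R :=
  match vertex_index x, vertex_index y with
  | 0, 5 => 4/5    | 5, 0 => 1/5
  | 0, 7 => 10/13  | 7, 0 => 3/13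
  | 1, 6 => 3/5    | 6, 1 => 2/5
  | 1, 7 => 38/51  | 7, 1 => 13/51
  | 2, 5 => 28/51  | 5, 2 => 23/51
  | 2, 6 => 7/13   | 6, 2 => 6/13
  | 3, 6 => 1/7    | 6, 3 => 6/7
  | 4, 7 => 1/7    | 7, 4 => 6/7
  | _, _ => 0
  end.

Definition crossing_edge (x y : V) : V * V :=
  match vertex_index x, vertex_index y with
  | 0, 5 | 5, 0 => (v1, v6)
  | 0, 7 | 7, 0 => (v2, v6)
  | 1, 6 | 6, 1 => (v0, v5)
  | 1, 7 | 7, 1 => (v2, v5)
  | 2, 5 | 5, 2 => (v1, v7)
  | 2, 6 | 6, 2 => (v0, v7)
  | 3, 6 | 6, 3 => (v4, v7)
  | 4, 7 | 7, 4 => (v3, v6)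
  | _, _ => (v0, v0)
  end.

Lemma G_irreflexive : irreflexive G.
Proof.
apply: gjoin_irreflexive; last exact: C3_irreflexive.
exact: gunion_irreflexive C3_irreflexive P2_irreflexive.
Qed.

Lemma pos_inj : injective pos.
Proof.
by move=> x y; elim/V_ind: y; elim/V_ind: x => //; rewrite /pos /= => -[]; lra.
Qed.

Lemma G_edge_avoids_vertices x y z t :
  G x y -> 0 < t < 1 -> seg (pos x) (pos y) t <> pos z.
Proof.
by elim/V_ind: z; elim/V_ind: y; elim/V_ind: x => //=;
  rewrite /seg /pos /= => _ t01 [] *; lra.
Qed.

Lemma G_crossing x y u v t s :
  G x y -> G u v -> ~ same_edge u v x y -> 0 < t < 1 -> 0 < s < 1 ->
  seg (pos x) (pos y) t = seg (pos u) (pos v) s ->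
  t = crossing_param x y /\ same_edge u v (crossing_edge x y).1 (crossing_edge x y).2.
Proof.
elim/V_ind: v; elim/V_ind: u; elim/V_ind: y; elim/V_ind: x => //= _ _ nuv t01 s01;
  first [by exfalso; apply: nuv; by [left | right] |
         rewrite /seg /pos /crossing_param /crossing_edge /= => -[E1 E2];
         by first [exfalso; lra | split; [lra | by [left | right]]]].
Qed.

Theorem lemma13 : one_planar (gjoin (gunion C3 P2) C3).
Proof.
apply: (@straight_line_one_planar _ G pos G_irreflexive pos_inj).
  exact: G_edge_avoids_vertices.
move=> x y Gxy.
exists (crossing_param x y), (crossing_edge x y).1, (crossing_edge x y).2.
by move=> u v t s; apply: G_crossing.
Qed.
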